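(* Let $q\ge2$, let $r$ be a positive integer, and let $f$ be a positive real-valued function on the nonnegative integers that is $q$-quasimultiplicative with parameter $r$, i.e. $f(q^{k+r}a+b)=f(a)f(b)$ for all nonnegative integers $a,b,k$ with $0\le b<q^k$. Let $\mathcal{M}_k=\{0,1,\dots,q^k-1\}$ and $$F(x,t)=\sum_{k\ge0}x^k\sum_{n\in\mathcal{M}_k}f(n)^t.$$ Let $\mathcal{B}$ be the set of all positive integers not divisible by $q$ whose $q$-ary representation does not contain the block $0^r$, let $\ell(n)$ be the length of the $q$-ary representation of $n$, and $B(x,t)=\sum_{n\in\mathcal{B}}x^{\ell(n)}f(n)^t$. Then, as formal power series in $x$, $$F(x,t)=\frac{1}{1-x}\cdot\frac{1}{1-\frac{x^r}{1-x}B(x,t)}\Bigl(1+(1+x+\dots+x^{r-1})B(x,t)\Bigr)=\frac{1+(1+x+\dots+x^{r-1})B(x,t)}{1-x-x^rB(x,t)}.$$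
   Context: The $q$-ary representation of a positive integer has no leading zeros. *)

From HB Require Import structures.
From mathcomp Require Import all_boot all_order all_algebra.
From mathcomp Require Import all_classical all_reals.
From mathcomp Require Import exp.
Set Implicit Arguments. Unset Strict Implicit. Unset Printing Implicit Defensive.
Import Order.TTheory GRing.Theory Num.Theory.
Local Open Scope ring_scope.

(* q-ary digits of n, least significant first; [::] for n = 0 (no leading
   zeros).  The fuel n suffices since q >= 2 implies n %/ q < n for n > 0. *)
Fixpoint digits_aux (q fuel n : nat) : seq nat :=
  if fuel is fuel'.+1 then
    if n == 0%N then [::] else (n %% q)%N :: digits_aux q fuel' (n %/ q)
  else [::].
Definition digits (q n : nat) : seq nat := digits_aux q n n.

Definition qlen (q n : nat) : nat := size (digits q n).

Definition quasimult (R : realType) (q r : nat) (f : nat -> R) : Prop :=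
  forall a b k : nat, (b < q ^ k)%N -> f (q ^ (k + r) * a + b)%N = f a * f b.

Definition inB (q r n : nat) : bool :=
  [&& (0 < n)%N, ~~ (q %| n)%N & ~~ infix (nseq r 0%N) (digits q n)].

Definition fps (R : realType) := nat -> R.
Definition fps_one (R : realType) : fps R := fun n => (n == 0%N)%:R.
Definition fps_Xn (R : realType) (k : nat) : fps R := fun n => (n == k)%:R.
Definition fps_add (R : realType) (a b : fps R) : fps R := fun n => a n + b n.
Definition fps_sub (R : realType) (a b : fps R) : fps R := fun n => a n - b n.
Definition fps_mul (R : realType) (a b : fps R) : fps R :=
  fun n => \sum_(i < n.+1) a i * b (n - i)%N.
Definition fps_geomr (R : realType) (r : nat) : fps R := fun n => (n < r)%N%:R.

Definition Fser (R : realType) (q : nat) (f : nat -> R) (t : R) : fps R :=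
  fun k => \sum_(n < q ^ k) f n `^ t.

(* B(x,t) = sum_{n in B} x^{ell(n)} f(n)^t ; the n with ell(n) = m are < q^m *)
Definition Bser (R : realType) (q r : nat) (f : nat -> R) (t : R) : fps R :=
  fun m => \sum_(n < q ^ m | inB q r n && (qlen q n == m)) f n `^ t.

From HB Require Import structures.
From mathcomp Require Import all_boot all_order all_algebra.
From mathcomp Require Import all_classical all_reals.
From mathcomp Require Import exp.
From mathcomp Require Import zify.

(* Every m > 0 is uniquely m = a q^j + b with a in B and b < q^(j - r): a is
   the part of m above its most significant run of at least r zeros, or, if
   there is no such run, m = a q^j with j < r trailing zeros (b = 0).  Since
   f(0) = 1, quasimultiplicativity gives f(m) = f(a) f(b), so summing f^t over
   the numbers of length N yields F_N - F_(N-1) = sum_j B_(N-j) F_(j-r), where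
   F_(j-r) = F_0 = 1 for j < r.  In series form
   (1 - x) F = 1 + (1 + x + ... + x^(r-1) + x^r F) B, which rearranges to the
   claimed identity. *)

Set Implicit Arguments. Unset Strict Implicit. Unset Printing Implicit Defensive.
Import Order.TTheory GRing.Theory Num.Theory.

Section Digits.

Variable q : nat.
Hypothesis hq : 1 < q.

Let q_gt0 : 0 < q. Proof. exact: ltnW. Qed.

Lemma digits_aux_fuel f1 f2 n : n <= f1 -> n <= f2 ->
  digits_aux q f1 n = digits_aux q f2 n.
Proof.
elim: f1 f2 n => [|f1 IH] [|f2] n //=.
- by rewrite leqn0 => /eqP->.
- by move=> _; rewrite leqn0 => /eqP->.
case: eqP => // /eqP n_neq0 n_f1 n_f2; congr cons.
have lt_n : n %/ q < n by rewrite ltn_Pdiv // lt0n.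
by apply: IH; lia.
Qed.

Lemma digitsS n : 0 < n -> digits q n = n %% q :: digits q (n %/ q).
Proof.
case: n => // n _; rewrite /digits /=; congr cons.
by apply: digits_aux_fuel => //; have := ltn_Pdiv hq (ltn0Sn n); lia.
Qed.

Lemma qlenS n : 0 < n -> qlen q n = (qlen q (n %/ q)).+1.
Proof. by move=> n_gt0; rewrite /qlen digitsS. Qed.

Lemma qlen_leq m k : (qlen q m <= k) = (m < q ^ k).
Proof.
elim: k m => [|k IH] [|m] //; first by rewrite expn_gt0 q_gt0.
by rewrite qlenS // ltnS IH ltn_divLR // expnSr.
Qed.

Lemma qlenMD a b k : 0 < a -> b < q ^ k -> qlen q (a * q ^ k + b) = qlen q a + k.
Proof.
elim: k b => [|k IH] b a_gt0; first by rewrite expn0 ltnS leqn0 => /eqP->; rewrite muln1 !addn0.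
move=> b_lt; rewrite qlenS; last by rewrite addn_gt0 muln_gt0 a_gt0 expn_gt0 q_gt0.
by rewrite expnSr mulnA divnMDl // IH ?addnS // ltn_divLR // -expnSr.
Qed.

Lemma prefix_digits r m : 0 < m -> prefix (nseq r 0) (digits q m) = (q ^ r %| m).
Proof.
elim: r m => [|r IH] m m_gt0; first by rewrite dvd1n prefix0s.
rewrite digitsS //= [0 == _]eq_sym -/(dvdn q m).
have [q_m | q_Nm] /= := boolP (q %| m).
  have mq_gt0 : 0 < m %/ q by rewrite divn_gt0 // dvdn_leq.
  by rewrite IH // expnSr -{2}(divnK q_m) dvdn_pmul2r.
apply/esym/negbTE; apply: contra q_Nm => /(dvdn_trans _); apply.
by rewrite expnS dvdn_mulr.
Qed.

End Digits.

Definition has_zero_block (q r m : nat) : bool := infix (nseq r 0) (digits q m).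

(* m = a q^j + b with a in B and b < q^(j - r); for j < r the truncated
   subtraction forces b = 0. *)
Definition Bsplit (q r j m : nat) : bool :=
  (m %% q ^ j < q ^ (j - r)) && inB q r (m %/ q ^ j).

Section Blocks.

Variables q r : nat.
Hypotheses (hq : 1 < q) (hr : 0 < r).

Let q_gt0 : 0 < q. Proof. exact: ltnW. Qed.

Lemma has_zero_blockS m : 0 < m ->
  has_zero_block q r m = (q ^ r %| m) || has_zero_block q r (m %/ q).
Proof.
by move=> m_gt0; rewrite /has_zero_block digitsS // infix_consl -digitsS // prefix_digits.
Qed.

Lemma has_zero_block_div m : has_zero_block q r (m %/ q) -> has_zero_block q r m.
Proof.
case: (posnP m) => [->|m_gt0]; first by rewrite div0n.
by rewrite (has_zero_blockS m_gt0) orbC => ->.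
Qed.

Lemma has_zero_block0 : has_zero_block q r 0 = false.
Proof. by case: r hr. Qed.

Lemma inB_div m : 0 < m -> ~~ (q %| m) -> ~~ has_zero_block q r (m %/ q) -> inB q r m.
Proof.
move=> m_gt0 q_Nm noblock_mq.
rewrite /inB -/(has_zero_block q r m) has_zero_blockS // m_gt0 q_Nm.
rewrite (negbTE noblock_mq) orbF /=.
by apply: contra q_Nm; apply: dvdn_trans; rewrite -(prednK hr) expnS dvdn_mulr.
Qed.

Lemma dvdn_expS_div k m : q %| m -> (q ^ k.+1 %| m) = (q ^ k %| m %/ q).
Proof. by move=> q_m; rewrite -{1}(divnK q_m) expnSr dvdn_pmul2r. Qed.

Lemma Bsplit0 m : Bsplit q r 0 m = inB q r m.
Proof. by rewrite /Bsplit expn0 modn1 divn1. Qed.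

Lemma BsplitS j m : Bsplit q r j.+1 m = ((r <= j) || (q %| m)) && Bsplit q r j (m %/ q).
Proof.
rewrite /Bsplit andbA expnS divnMA; congr andb.
case: (leqP r j) => [r_le_j | j_lt_r] /=.
  by rewrite modn_divl [q * _]mulnC subSn // ltn_divLR // [q ^ (j - r).+1]expnSr.
have -> : j.+1 - r = 0 by lia.
have -> : j - r = 0 by lia.
rewrite !ltnS !leqn0 -!/(dvdn _ _) -expnS.
have [q_m | q_Nm] /= := boolP (q %| m); first exact: dvdn_expS_div.
by apply/negbTE; apply: contra q_Nm; apply: dvdn_trans; rewrite expnS dvdn_mulr.
Qed.

Lemma Bsplit_leq j m : Bsplit q r j m -> q ^ j <= m.
Proof. by case/andP=> _ /and3P[]; rewrite divn_gt0 // expn_gt0 q_gt0. Qed.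

Lemma Bsplit_gt0 j m : Bsplit q r j m -> 0 < m.
Proof. by move/Bsplit_leq; apply: leq_trans; rewrite expn_gt0 q_gt0. Qed.

Lemma Bsplit_block j m : r <= j -> Bsplit q r j m -> has_zero_block q r m.
Proof.
elim: j m => [|j IH] m; first by rewrite leqNgt hr.
rewrite leq_eqVlt ltnS => /orP[/eqP r_eq | r_le_j] split_m.
  have m_gt0 := Bsplit_gt0 split_m.
  move: split_m; rewrite /Bsplit -r_eq subnn ltnS leqn0 -/(dvdn _ _) => /andP[qr_m _].
  by rewrite has_zero_blockS // qr_m.
by move: split_m; rewrite BsplitS r_le_j => /(IH _ r_le_j) /has_zero_block_div.
Qed.

(* The divisibility clause is what makes the induction on j go through. *)
Lemma Bsplit_noblock j m : j < r -> Bsplit q r j m ->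
  ~~ has_zero_block q r m && ~~ (q ^ j.+1 %| m).
Proof.
elim: j m => [|j IH] m j_lt_r.
  by rewrite Bsplit0 => /and3P[_ q_Nm noblock_m]; rewrite noblock_m expn1.
rewrite BsplitS leqNgt (ltnW j_lt_r) /= => /andP[q_m split_mq].
have /andP[noblock_mq qj_Nmq] := IH _ (ltnW j_lt_r) split_mq.
have m_gt0 : 0 < m by apply: leq_trans (Bsplit_gt0 split_mq) (leq_div _ _).
rewrite has_zero_blockS // negb_or noblock_mq andbT dvdn_expS_div // qj_Nmq andbT.
apply: contra qj_Nmq => qr_m; rewrite -dvdn_expS_div //.
exact: dvdn_trans (dvdn_exp2l q j_lt_r) qr_m.
Qed.

Lemma inB_BsplitS j m : inB q r m -> Bsplit q r j.+1 m = false.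
Proof.
case/and3P=> _ q_Nm noblock_m; rewrite BsplitS (negbTE q_Nm) orbF.
apply/negbTE; apply: contra noblock_m => /andP[r_le_j split_mq].
exact/has_zero_block_div/(Bsplit_block r_le_j).
Qed.

Lemma Bsplit_uniq i j m : Bsplit q r i m -> Bsplit q r j m -> i = j.
Proof.
elim: i j m => [|i IH] [|j] m //; rewrite ?Bsplit0.
- by move=> /(inB_BsplitS j) ->.
- by move=> split_i /(inB_BsplitS i); rewrite split_i.
by rewrite !BsplitS => /andP[_ /IH split_i] /andP[_ /split_i ->].
Qed.

Lemma Bsplit_exists m : 0 < m -> exists j, Bsplit q r j m.
Proof.
elim/ltn_ind: m => m IH m_gt0.
case B_m: (inB q r m); first by exists 0; rewrite Bsplit0.
have [q_m | q_Nm] := boolP (q %| m).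
  have mq_gt0 : 0 < m %/ q by rewrite divn_gt0 // dvdn_leq.
  have [j split_mq] := IH _ (ltn_Pdiv hq m_gt0) mq_gt0.
  by exists j.+1; rewrite BsplitS q_m orbT.
case: (posnP (m %/ q)) => [mq0 | mq_gt0].
  by move: B_m; rewrite inB_div // mq0 has_zero_block0.
have [j split_mq] := IH _ (ltn_Pdiv hq m_gt0) mq_gt0.
case: (leqP r j) => [r_le_j | j_lt_r]; first by exists j.+1; rewrite BsplitS r_le_j.
have /andP[noblock_mq _] := Bsplit_noblock j_lt_r split_mq.
by move: B_m; rewrite inB_div.
Qed.

Lemma BsplitMD j a b : b < q ^ j ->
  Bsplit q r j (a * q ^ j + b) = (b < q ^ (j - r)) && inB q r a.
Proof.
move=> b_lt; have qj_gt0 : 0 < q ^ j by rewrite expn_gt0 q_gt0.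
by rewrite /Bsplit modnMDl modn_small // divnMDl // divn_small // addn0.
Qed.

End Blocks.

Lemma big_ord_mul_split (R : Type) (idx : R) (op : Monoid.com_law idx) n k (F : nat -> R) :
  \big[op/idx]_(m < n * k) F m = \big[op/idx]_(a < n) \big[op/idx]_(b < k) F (a * k + b).
Proof.
rewrite -(big_mkord xpredT) big_nat_mul big_mkord; apply: eq_bigr => a _.
rewrite (big_addn 0 _ (a * k)) mulSn addnK big_mkord.
by apply: eq_bigr => b _; rewrite addnC.
Qed.

Local Open Scope ring_scope.

Lemma sum_expS_qlen (R : nmodType) q (h : nat -> R) N : (1 < q)%N ->
  \sum_(m < q ^ N.+1) h m =
  \sum_(m < q ^ N) h m + \sum_(m < q ^ N.+1 | qlen q m == N.+1) h m.
Proof.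
move=> hq; rewrite (bigID (fun m : 'I__ => qlen q m == N.+1)) /= addrC; congr (_ + _).
rewrite (big_ord_widen _ _ (leq_pexp2l (ltnW hq) (leqnSn N))); apply: eq_bigl => m.
have := ltn_ord m; rewrite -!qlen_leq //; lia.
Qed.

Section QlenSums.

Variables (R : pzSemiRingType) (q r : nat) (h : nat -> R).
Hypotheses (hq : (1 < q)%N) (hr : (0 < r)%N).

Hypothesis h_split : forall j a b, (b < q ^ (j - r))%N -> h (a * q ^ j + b)%N = h a * h b.

Let q_gt0 : (0 < q)%N. Proof. exact: ltnW. Qed.

Lemma sum_qlen_Bsplit n j :
  \sum_(m < q ^ (n + j) | (qlen q m == n + j)%N && Bsplit q r j m) h m =
  (\sum_(a < q ^ n | inB q r a && (qlen q a == n)) h a) * \sum_(b < q ^ (j - r)) h b.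
Proof.
rewrite expnD big_mkcond (big_ord_mul_split _ _ _
  (fun m => if (qlen q m == n + j) && Bsplit q r j m then h m else 0)).
rewrite big_distrl [RHS]big_mkcond /=.
apply: eq_bigr => a _.
have [B_a | NB_a] := boolP (inB q r a); last first.
  by rewrite big1 // => b _; rewrite (BsplitMD r hq a (ltn_ord b)) (negbTE NB_a) !andbF.
have a_gt0 : (0 < a)%N by case/and3P: B_a.
under eq_bigr => b _ do
  rewrite (BsplitMD r hq a (ltn_ord b)) (qlenMD hq a_gt0 (ltn_ord b)) eqn_add2r B_a andbT.
case: (qlen q a == n); last by rewrite big1.
rewrite (big_ord_widen _ _ (leq_pexp2l q_gt0 (leq_subr r j))) big_distrr [RHS]big_mkcond /=.
by apply: eq_bigr => b _; case: ifP => // b_lt; rewrite h_split.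
Qed.

Lemma sum_qlen_decomposition N : (0 < N)%N ->
  \sum_(m < q ^ N | qlen q m == N) h m =
  \sum_(j < N.+1) (\sum_(a < q ^ (N - j) | inB q r a && (qlen q a == N - j)%N) h a) *
                  \sum_(b < q ^ (j - r)) h b.
Proof.
move=> N_gt0.
have split_m (m : 'I_(q ^ N)) : qlen q m == N -> h m = \sum_(j < N.+1 | Bsplit q r j m) h m.
  move=> /eqP len_m.
  have m_gt0 : (0 < m)%N by move: len_m N_gt0; case: (nat_of_ord m) => [<-|].
  have [j0 split_j0] := Bsplit_exists hq hr m_gt0.
  have j0_lt_N : (j0 < N)%N.
    by rewrite -(ltn_exp2l _ _ hq) (leq_ltn_trans (Bsplit_leq hq split_j0)).
  rewrite (eq_bigl (fun j : 'I_N.+1 => (j : nat) == j0)).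
    by rewrite (big_ord1_eq _ (fun=> h m)) ifT //; apply: ltnW.
  move=> j; apply/idP/eqP => [split_j | ->] //.
  exact: (Bsplit_uniq hq hr split_j split_j0).
rewrite (eq_bigr _ split_m) (exchange_big_dep xpredT) //=; apply: eq_bigr => j _.
by rewrite -sum_qlen_Bsplit subnK // -ltnS.
Qed.

End QlenSums.

Section QuasiMultiplicative.

Variables (R : realType) (q r : nat) (f : nat -> R).
Hypotheses (q_gt0 : (0 < q)%N) (hf : quasimult q r f).

Lemma quasimult0 : f 0%N != 0 -> f 0%N = 1.
Proof.
move=> f0_neq0; apply: (mulfI f0_neq0).
by rewrite mulr1 -(hf 0%N (b:=0%N) (k:=0%N)) // muln0.
Qed.

Lemma quasimult_powR t : (forall n, 0 <= f n) -> quasimult q r (fun n => f n `^ t).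
Proof. by move=> f_ge0 a b k b_lt; rewrite hf // powRM. Qed.

Hypothesis f0 : f 0%N = 1.

Lemma quasimult_mulX a j : f (a * q ^ j)%N = f a.
Proof.
have := hf (a * q ^ j)%N (b:=0%N) (k:=0%N) isT.
have := hf a (b:=0%N) (k:=j).
rewrite expn_gt0 q_gt0 f0 !mulr1 !addn0 add0n => /(_ isT) <- <-.
by congr f; rewrite expnD; nia.
Qed.

Lemma quasimult_split j a b : (b < q ^ (j - r))%N -> f (a * q ^ j + b)%N = f a * f b.
Proof.
case: (leqP r j) => [r_le_j | j_lt_r] b_lt.
  by rewrite -(hf a (k := (j - r)%N)) // subnK // mulnC.
move: b_lt; have -> : (j - r = 0)%N by apply/eqP; rewrite subn_eq0 ltnW.
by rewrite expn0 ltnS leqn0 => /eqP->; rewrite addn0 quasimult_mulX f0 mulr1.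
Qed.

End QuasiMultiplicative.

Section FormalPowerSeries.

Variable R : realType.
Implicit Types a b : fps R.

Lemma fps_mulC a b : fps_mul a b = fps_mul b a.
Proof.
apply: funext => n; rewrite /fps_mul (reindex_inj rev_ord_inj) /=.
apply: eq_bigr => i _; have i_le_n : (i <= n)%N := ltn_ord i.
by rewrite subSS subKn // mulrC.
Qed.

Lemma fps_Xn_mul k a :
  fps_mul (fps_Xn R k) a = fun n => if (k <= n)%N then a (n - k)%N else 0.
Proof.
apply: funext => n; rewrite /fps_mul /fps_Xn.
under eq_bigr do rewrite mulr_natl mulrb.
by rewrite -big_mkcond (big_ord1_eq _ (fun i => a (n - i)%N)).
Qed.

Lemma fps_mulXn a k :
  fps_mul a (fps_Xn R k) = fun n => if (k <= n)%N then a (n - k)%N else 0.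
Proof. by rewrite fps_mulC fps_Xn_mul. Qed.

Lemma fps_mulr1 a : fps_mul a (fps_one R) = a.
Proof. by rewrite (fps_mulXn a 0); apply: funext => n; rewrite subn0. Qed.

Lemma fps_mulBr a b c : fps_mul a (fps_sub b c) = fps_sub (fps_mul a b) (fps_mul a c).
Proof.
apply: funext => n; rewrite /fps_mul /fps_sub -sumrB.
by apply: eq_bigr => i _; rewrite mulrBr.
Qed.

Lemma fps_mulDl a b c : fps_mul (fps_add a b) c = fps_add (fps_mul a c) (fps_mul b c).
Proof.
apply: funext => n; rewrite /fps_mul /fps_add -big_split.
by apply: eq_bigr => i _; rewrite mulrDl.
Qed.

Lemma fps_Xn_mulA k a b :
  fps_mul (fps_mul (fps_Xn R k) a) b = fps_mul (fps_Xn R k) (fps_mul a b).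
Proof.
rewrite !fps_Xn_mul; apply: funext => n; rewrite /fps_mul.
case: leqP => [k_le_n | n_lt_k]; last first.
  by rewrite big1 // => i _; rewrite leqNgt (leq_trans (ltn_ord i) n_lt_k) mul0r.
pose G i := (if (k <= i)%N then a (i - k)%N else 0) * b (n - i)%N.
rewrite -(big_mkord xpredT G) (big_cat_nat (leq0n k) (leqW k_le_n)) /=.
rewrite big1_seq ?add0r => [|i]; last first.
  by rewrite mem_index_iota => /andP[_ /andP[_ i_lt_k]]; rewrite /G leqNgt i_lt_k mul0r.
rewrite (big_addn 0) subSn // big_mkord; apply: eq_bigr => i _.
by rewrite /G leq_addl addnK addnC subnDA.
Qed.

End FormalPowerSeries.

Section Series.

Variables (R : realType) (q r : nat) (f : nat -> R) (t : R).
Hypotheses (hq : (1 < q)%N) (hr : (0 < r)%N).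
Hypotheses (f_gt0 : forall n, 0 < f n) (hf : quasimult q r f).

Let f0 : f 0%N = 1. Proof. exact: quasimult0 hf (lt0r_neq0 (f_gt0 0%N)). Qed.

Lemma Fser0 : Fser q f t 0%N = 1.
Proof. by rewrite /Fser expn0 big_ord1 f0 powR1. Qed.

Lemma Bser0 : Bser q r f t 0%N = 0.
Proof. by rewrite /Bser big1 // => -[[|n] //]. Qed.

Lemma Fser_diffS N : Fser q f t N.+1 =
  Fser q f t N + \sum_(j < N.+2) Bser q r f t (N.+1 - j)%N * Fser q f t (j - r)%N.
Proof.
pose g n := f n `^ t.
have g_split := quasimult_split (ltnW hq) (quasimult_powR hf t (fun n => ltW (f_gt0 n))).
rewrite /Fser (sum_expS_qlen g) // (sum_qlen_decomposition (h := g) hq hr) //.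
by apply: g_split; rewrite f0 powR1.
Qed.

Lemma Fser_equation :
  fps_sub (Fser q f t) (fps_mul (Fser q f t) (fps_Xn R 1)) =
  fps_add (fps_one R)
    (fps_mul (fps_add (fps_geomr R r) (fps_mul (fps_Xn R r) (Fser q f t))) (Bser q r f t)).
Proof.
set F := Fser q f t; set C := fps_add (fps_geomr R r) _.
have CE j : C j = F (j - r)%N.
  rewrite /C fps_Xn_mul /fps_add /fps_geomr; case: (leqP r j) => [_ | j_lt_r].
    by rewrite add0r.
  by rewrite addr0; move/ltnW: j_lt_r; rewrite -subn_eq0 => /eqP->; rewrite [F 0%N]Fser0.
rewrite fps_mulXn; apply: funext => -[|N]; rewrite /fps_sub /fps_add /fps_one /fps_mul /=.
  by rewrite big_ord1 Bser0 mulr0 subr0 addr0 [F 0%N]Fser0.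
rewrite [F N.+1]Fser_diffS -/F subn1 /= [F N + _]addrC addrK add0r.
by apply: eq_bigr => j _; rewrite CE mulrC.
Qed.

End Series.

Theorem proposition11 (R : realType) (q r : nat) (f : nat -> R) (t : R)
  (hq : (2 <= q)%N) (hr : (0 < r)%N)
  (hpos : forall n, 0 < f n) (hf : quasimult q r f) :
  fps_mul (Fser q f t)
    (fps_sub (fps_sub (fps_one R) (fps_Xn R 1))
             (fps_mul (fps_Xn R r) (Bser q r f t)))
  = fps_add (fps_one R) (fps_mul (fps_geomr R r) (Bser q r f t)).
Proof.
set F := Fser q f t; set B := Bser q r f t.
have shift_FB : fps_mul F (fps_mul (fps_Xn R r) B) = fps_mul (fps_Xn R r) (fps_mul F B).
  by rewrite fps_mulC fps_Xn_mulA [fps_mul B F]fps_mulC.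
rewrite !fps_mulBr fps_mulr1 (Fser_equation t hq hr hpos hf) -/F -/B.
rewrite fps_mulDl fps_Xn_mulA shift_FB.
by apply: funext => n; rewrite /fps_sub /fps_add addrA addrK.
Qed.
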